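(* Let $n\in\mathbb N$. Then $B_n^{[n-1]}=\{w_I:I\subseteq[n]\}$, and the map $\alpha:\mathsf T_n\cup\{\varnothing\}\to B_n^{[n-1]}$, $I\mapsto w_{g(I)}$, where $g(I)=\{n-j+1:j\in[n]\setminus I\}$, is an isomorphism of posets, where $B_n^{[n-1]}$ carries the Bruhat order and $\mathsf T_n\cup\{\varnothing\}$ carries the tableau order extended by $A\sqsubseteq\varnothing$ for all $A$.
   Context: Tableau order: for nonempty $A,B\subseteq[n]$, $A\sqsubseteq B$ iff there is a two-column semistandard Young tableau with first column entry set $A$ and second column entry set $B$ (equivalently $\#A\ge\#B$ and $A(k)\le B(k)$ for $k\le\#B$, $A(k)$ the $k$-th smallest element); $\mathsf T_n=(2^{[n]}\setminus\{\varnothing\},\sqsubseteq)$. $B_n$ is the hyperoctahedral Coxeter group with simple reflections $s_0,\dots,s_{n-1}$ and relations $s_j^2=1$, $(s_0s_1)^4=1$, $(s_is_{i+1})^3=1$ for $i\in[n-2]$, $(s_js_k)^2=1$ for $|j-k|\ge2$; $\ell$ is its Coxeter length. $B_n^{[n-1]}=\{w\in B_n:\ell(w)<\ell(ws_i)\ \forall i\in[n-1]\}$, with the restriction of the Bruhat order ($u\le w$ iff some reduced word for $w$ contains a subword that is a reduced word for $u$). Define $w_1=s_0$, $w_{k+1}=s_kw_k$ for $k\in[n-1]$, and for $I=\{i_1<\dots<i_m\}\subseteq[n]$, $w_I=w_{i_1}\cdots w_{i_m}$ ($w_\varnothing=1$). *)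

From mathcomp Require Import all_boot all_order all_fingroup.
Set Implicit Arguments. Unset Strict Implicit. Unset Printing Implicit Defensive.

(* The hyperoctahedral group B_n, realized faithfully as the group of signed
   permutations of [n]: permutations of {+,-} x [n] (bool * 'I_n), with the
   Coxeter generators s_0 = sign change of the first letter and
   s_i (1 <= i <= n-1) = simultaneous transposition of letters i and i+1
   (letters are 0-indexed in 'I_n, so letter k+1 is the ordinal k). *)
Definition SP (n : nat) := {perm (bool * 'I_n)}.

Local Open Scope group_scope.

Definition sgen (n i : nat) : SP n :=
  match @insub _ (fun k => k < n) _ i.-1, @insub _ (fun k => k < n) _ i with
  | Some a, Some b =>
      if i == 0 then tperm (false, b) (true, b)
      else tperm (false, a) (false, b) * tperm (true, a) (true, b)
  | _, _ => 1
  end.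

Definition valid_word (n : nat) (w : seq nat) : bool := all (fun i => i < n) w.

Definition eval_word (n : nat) (w : seq nat) : SP n := \prod_(i <- w) sgen n i.

Definition inBn (n : nat) (x : SP n) : Prop :=
  exists w, valid_word n w /\ eval_word n w = x.

Definition reduced (n : nat) (w : seq nat) : Prop :=
  valid_word n w /\
  forall w', valid_word n w' -> eval_word n w' = eval_word n w -> size w <= size w'.

Definition coxlen (n : nat) (x : SP n) (k : nat) : Prop :=
  exists w, reduced n w /\ eval_word n w = x /\ size w = k.

Definition inBnQ (n : nat) (x : SP n) : Prop :=
  inBn x /\
  forall i, 1 <= i < n ->
    forall k k', coxlen x k -> coxlen (x * sgen n i) k' -> k < k'.

Definition bruhat (n : nat) (u w : SP n) : Prop :=
  exists a b, [/\ reduced n a, eval_word n a = w, reduced n b,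
                 eval_word n b = u & subseq b a].

(* Subsets of [n] are represented as {set 'I_n}; the ordinal k stands for the
   element k+1 of [n]. *)
Definition sorted_elems (n : nat) (A : {set 'I_n}) : seq nat :=
  sort leq [seq val i | i <- enum A].

(* A(k), 0-indexed *)
Definition kth (n : nat) (A : {set 'I_n}) (k : nat) : nat := nth 0 (sorted_elems A) k.

Definition tab_le (n : nat) (A B : {set 'I_n}) : bool :=
  (B == set0) ||
  [&& A != set0, #|B| <= #|A| & all (fun k => kth A k <= kth B k) (iota 0 #|B|)].

(* w_{k+1} = s_k s_{k-1} ... s_1 s_0, as a word; argument j stands for k+1 = j+1 *)
Definition wword (j : nat) : seq nat := rev (iota 0 j.+1).

Definition wI (n : nat) (I : {set 'I_n}) : SP n :=
  eval_word n (flatten [seq wword j | j <- sorted_elems I]).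

(* g(I) = {n - j + 1 : j in [n] \ I}; with 0-indexing this is rev_ord on ~: I *)
Definition gmap (n : nat) (I : {set 'I_n}) : {set 'I_n} := [set rev_ord j | j in ~: I].

Definition alpha (n : nat) (I : {set 'I_n}) : SP n := wI (gmap I).

From mathcomp Require Import all_boot all_order all_fingroup zify.
Set Implicit Arguments. Unset Strict Implicit. Unset Printing Implicit Defensive.

(* B_n acts on the letters -n < ... < -1 < 1 < ... < n as the permutations commuting
   with negation.  For such x, the number of inversions plus the number of positive
   letters sent to negative ones is twice the Coxeter length: right multiplication by
   s_i changes it by +2 or -2 according as x^-1 keeps the two letters exchanged by s_i in
   order or not, and every x <> 1 has such a descent.  Hence x lies in B_n^{[n-1]} iff
   x^-1 is increasing on the positive letters, and such an x is determined by the set of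
   positive letters it makes negative; w_I realises the set I, and its defining word is
   reduced.
   For the Bruhat order, the rank counts #{p <= k : x p >= t} can only grow from a subword
   of a reduced word to the whole word (lifting property); for alpha I they are the counts
   #({1, ..., s+1} \ I) that encode the tableau order.  Conversely, if I is below J then
   the defining word of alpha I is a subword of that of alpha J. *)

Local Open Scope group_scope.

Lemma tperm_comm (T : finType) (a b c d p : T) : a != c -> a != d -> b != c -> b != d ->
  tperm a b (tperm c d p) = tperm c d (tperm a b p).
Proof.
move=> ac ad bc bd.
case: (tpermP c d p) => [->|->|/eqP pc /eqP pd].
- by rewrite (tpermD ac bc) tpermL (tpermD ad bd).
- by rewrite (tpermD ad bd) tpermR (tpermD ac bc).
by case: (tpermP a b p) => [ea|eb|pa pb]; rewrite tpermD // eq_sym.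
Qed.

Section Letters.
Variable n : nat.
Local Notation letter := (bool * 'I_n)%type.

(* [(true, a)] is the letter [-(a+1)] and [(false, a)] the letter [a+1];
   [lrank] numbers [-n < ... < -1 < 1 < ... < n] as [0, ..., 2n-1]. *)
Definition lrank (p : letter) : nat := if p.1 then n - 1 - p.2 else n + p.2.
Definition lneg (p : letter) : letter := (~~ p.1, p.2).

Lemma lrank_inj : injective lrank.
Proof.
move=> [[] a] [[] b]; rewrite /lrank /= => h; have := ltn_ord a; have := ltn_ord b;
  move=> ? ?; try (congr pair; apply: val_inj => /=; lia); lia.
Qed.

Lemma lrank_eq (u v : letter) : (u == v) = (lrank u == lrank v).
Proof. by rewrite (inj_eq lrank_inj). Qed.

Lemma lrank_lt p : lrank p < n + n.
Proof. case: p => [[] a]; rewrite /lrank /=; have := ltn_ord a; lia. Qed.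

Lemma lrank_pos p : (n <= lrank p) = ~~ p.1.
Proof. case: p => [[] a]; rewrite /lrank /=; have := ltn_ord a; lia. Qed.

Lemma lrank_surj k : k < n + n -> exists p, lrank p = k.
Proof.
move=> hk; case: (ltnP k n) => h.
  have h' : n - 1 - k < n by lia.
  by exists (true, Ordinal h'); rewrite /lrank /=; lia.
have h' : k - n < n by lia.
by exists (false, Ordinal h'); rewrite /lrank /=; lia.
Qed.

Lemma lnegK : involutive lneg.
Proof. by case=> b a; rewrite /lneg /= negbK. Qed.

Lemma lrank_lneg p : lrank (lneg p) = n + n - 1 - lrank p.
Proof. case: p => [[] a]; rewrite /lrank /=; have := ltn_ord a; lia. Qed.

Lemma lrank_lneg_lt p : (lrank (lneg p) < lrank p) = ~~ p.1.
Proof. case: p => [[] a]; rewrite /lrank /=; have := ltn_ord a; lia. Qed.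

Lemma ltn_lrank_lneg p q : (lrank (lneg p) < lrank (lneg q)) = (lrank q < lrank p).
Proof. by rewrite !lrank_lneg; have := lrank_lt p; have := lrank_lt q; lia. Qed.

Lemma lrank_lneg_adj p q : lrank q = (lrank p).+1 -> lrank (lneg p) = (lrank (lneg q)).+1.
Proof. by rewrite !lrank_lneg; have := lrank_lt q; lia. Qed.

Lemma letter_ext (p q : letter) : p.1 = q.1 -> nat_of_ord p.2 = nat_of_ord q.2 -> p = q.
Proof. by case: p q => [b1 l1] [b2 l2] /= -> e; congr pair; apply: val_inj. Qed.

Lemma letter_eq (p q : letter) : (p == q) = (p.1 == q.1) && (nat_of_ord p.2 == q.2).
Proof.
apply/eqP/andP => [-> //|[/eqP e1 /eqP e2]]; exact: letter_ext.
Qed.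

Definition signed (x : SP n) := forall p, x (lneg p) = lneg (x p).

Lemma signed1 : signed 1.
Proof. by move=> p; rewrite !perm1. Qed.

Lemma signedM x y : signed x -> signed y -> signed (x * y).
Proof. by move=> hx hy p; rewrite !permM hx hy. Qed.

Lemma signedV x : signed x -> signed x^-1.
Proof. by move=> hx p; apply: (@perm_inj _ x); rewrite permKV hx permKV. Qed.

Lemma signed_invE x p : signed x -> x^-1 (lneg p) = lneg (x^-1 p).
Proof. by move=> hx; apply: signedV. Qed.

Lemma tperm_lneg (a b p : letter) : tperm (lneg a) (lneg b) (lneg p) = lneg (tperm a b p).
Proof.
have ni := can_inj lnegK.
case: (tpermP a b p) => [->|->|/eqP pa /eqP pb]; first by rewrite tpermL.
  by rewrite tpermR.
by rewrite tpermD // (inj_eq ni) eq_sym.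
Qed.

Lemma signed_tperm_lneg a : signed (tperm a (lneg a)).
Proof. by move=> p; rewrite -tperm_lneg lnegK tpermC. Qed.

Lemma signed_tperm_pair a b :
  signed (tperm ((false, a) : letter) (false, b) * tperm ((true, a) : letter) (true, b)).
Proof.
move=> p; rewrite !permM.
have e1 q : tperm ((false, a) : letter) (false, b) (lneg q) = lneg (tperm (true, a) (true, b) q).
  by rewrite -tperm_lneg.
have e2 q : tperm ((true, a) : letter) (true, b) (lneg q) = lneg (tperm (false, a) (false, b) q).
  by rewrite -tperm_lneg.
by rewrite e1 e2 tperm_comm.
Qed.

Lemma signed_sgen i : signed (sgen n i).
Proof.
rewrite /sgen; case: (insub i.-1 : option 'I_n) => [a|]; last exact: signed1.
case: (insub i : option 'I_n) => [b|]; last exact: signed1.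
case: eqP => _; [exact: (signed_tperm_lneg (false, b)) | exact: signed_tperm_pair].
Qed.

Lemma signed_eval w : signed (eval_word n w).
Proof.
rewrite /eval_word; elim: w => [|i w IH]; first by rewrite big_nil; exact: signed1.
by rewrite big_cons; apply: signedM => //; exact: signed_sgen.
Qed.

End Letters.

Lemma rank_chain (T : Type) (f : T -> nat) (R : T -> T -> Prop) :
  (forall x y z, R x y -> R y z -> R x z) ->
  (forall x y k, f x < k < f y -> exists z, f z = k) ->
  (forall x y, f y = (f x).+1 -> R x y) ->
  forall x y, f x < f y -> R x y.
Proof.
move=> trR surj adj; suff chain k x y : f y = f x + k.+1 -> R x y.
  by move=> x y lt; apply: (chain (f y - f x).-1); lia.
elim: k x y => [|k IH] x y e; first by apply: adj; lia.
have [z hz] := surj x y (f x + k.+1) ltac:(lia).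
by apply: trR (IH x z _) (adj z y _); lia.
Qed.

Section Generators.
Variable n : nat.
Local Notation letter := (bool * 'I_n)%type.
Local Notation lrank := (@lrank n).

Lemma lrank_chain (R : letter -> letter -> Prop) :
  (forall x y z, R x y -> R y z -> R x z) ->
  (forall u v, lrank v = (lrank u).+1 -> R u v) ->
  forall u v, lrank u < lrank v -> R u v.
Proof.
move=> trR; apply: rank_chain => // u v k hk; apply: lrank_surj.
by have := lrank_lt v; lia.
Qed.

Lemma lrank_perm_ltgt (x : SP n) (c d : letter) : c != d ->
  lrank (x c) < lrank (x d) \/ lrank (x d) < lrank (x c).
Proof.
move=> ne; case: (ltngtP (lrank (x c)) (lrank (x d))) => h; [by left | by right |].
by move/lrank_inj/perm_inj: h => e; rewrite e eqxx in ne.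
Qed.

Lemma lneg_eqF (p q : letter) : p.1 = q.1 -> (lneg p == q) = false.
Proof. by move=> e; rewrite letter_eq /= e; case: q.1. Qed.

Lemma eq_lnegF (p q : letter) : p.1 = q.1 -> (p == lneg q) = false.
Proof. by move=> e; rewrite eq_sym lneg_eqF. Qed.

(* The adjacent letters [c < d] exchanged by [s_i]: [(-1, 1)] for [s_0] and
   [(i, i+1)] for [i >= 1]. *)
Definition sgen_pair (i : nat) (c d : letter) : bool :=
  if i == 0 then [&& c.1, ~~ d.1, nat_of_ord c.2 == 0 & nat_of_ord d.2 == 0]
  else [&& ~~ c.1, ~~ d.1, nat_of_ord c.2 == i.-1 & nat_of_ord d.2 == i].

Lemma sgen_pair_exists i : i < n -> exists c d, sgen_pair i c d.
Proof.
move=> hi; have h1 : i.-1 < n by lia.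
exists (if i == 0 then (true, Ordinal hi) else (false, Ordinal h1)), (false, Ordinal hi).
by rewrite /sgen_pair; case: eqP => [e|] /=; rewrite ?e !eqxx.
Qed.

Lemma sgen_pair_adj i c d : sgen_pair i c d -> lrank d = (lrank c).+1.
Proof.
case: c d => [bc c] [bd d]; rewrite /sgen_pair /lrank /=; have := ltn_ord c; have := ltn_ord d.
case: eqP => hi0; case: bc; case: bd => //= ? ? /andP [/eqP ? /eqP ?]; lia.
Qed.

Lemma sgen_pair_neq i c d : sgen_pair i c d -> c != d.
Proof. by move=> /sgen_pair_adj e; rewrite lrank_eq e; apply/eqP; lia. Qed.

Lemma sgen_pairE i c d : i < n -> sgen_pair i c d ->
  if i == 0 then [/\ c = lneg d, d.1 = false & sgen n i = tperm c d]
  else [/\ c.1 = false, d.1 = false & sgen n i = tperm c d * tperm (lneg d) (lneg c)].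
Proof.
move=> hi; have h1 : i.-1 < n by lia.
rewrite /sgen_pair /sgen (insubT (fun k => k < n) h1) (insubT (fun k => k < n) hi).
case: c d => [bc c] [bd d]; case: eqP => [i0|i0] /= /and4P [].
  move=> -> /negbTE -> /eqP c0 /eqP d0.
  have -> : c = d by apply: val_inj => /=; rewrite c0 d0.
  have -> : Sub i hi = d by apply: val_inj => /=; lia.
  by rewrite tpermC.
move=> /negbTE -> /negbTE -> /eqP c0 /eqP d0.
have -> : Sub i.-1 h1 = c by apply: val_inj.
have -> : Sub i hi = d by apply: val_inj.
by rewrite [tperm (true, _) _]tpermC.
Qed.

Lemma sgenK i : involutive (sgen n i).
Proof.
move=> p; rewrite /sgen; case: (insub i.-1 : option 'I_n) => [a|]; last by rewrite !perm1.
case: (insub i : option 'I_n) => [b|]; last by rewrite !perm1.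
case: eqP => _; first by rewrite tpermK.
by rewrite !permM tperm_comm ?tpermK //; apply/eqP; case.
Qed.

Lemma sgenV_app i (p : letter) : (sgen n i)^-1 p = sgen n i p.
Proof. by apply: (@perm_inj _ (sgen n i)); rewrite permKV sgenK. Qed.

Lemma mulg_sgenK (x : SP n) i : x * sgen n i * sgen n i = x.
Proof. by apply/permP => p; rewrite !permM sgenK. Qed.

Lemma sgen_pair_swap i c d : i < n -> sgen_pair i c d -> sgen n i c = d /\ sgen n i d = c.
Proof.
move=> hi hp; have := sgen_pairE hi hp; case: eqP => _ [].
  by move=> _ _ ->; rewrite tpermL tpermR.
move=> c1 d1 ->.
have cd : c.1 = d.1 by rewrite c1 d1.
by rewrite !permM tpermL tpermR !tpermD ?lneg_eqF.
Qed.

Lemma invM_sgen_pair (x : SP n) i c d : i < n -> sgen_pair i c d ->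
  (x * sgen n i)^-1 c = x^-1 d /\ (x * sgen n i)^-1 d = x^-1 c.
Proof.
move=> hi hp; have [e1 e2] := sgen_pair_swap hi hp.
by split; apply: (@perm_inj _ (x * sgen n i)); rewrite permKV permM permKV.
Qed.

Lemma eval_nil : eval_word n [::] = 1.
Proof. by rewrite /eval_word big_nil. Qed.

Lemma eval_cons i w : eval_word n (i :: w) = sgen n i * eval_word n w.
Proof. by rewrite /eval_word big_cons. Qed.

Lemma eval_rcons w i : eval_word n (rcons w i) = eval_word n w * sgen n i.
Proof. by rewrite /eval_word -cats1 big_cat big_seq1. Qed.

Lemma eval_cat w1 w2 : eval_word n (w1 ++ w2) = eval_word n w1 * eval_word n w2.
Proof. by rewrite /eval_word big_cat. Qed.

End Generators.

Section DoubledLength.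
Variable n : nat.
Local Notation letter := (bool * 'I_n)%type.
Local Notation lrank := (@lrank n).

Definition inversions (x : SP n) : {set letter * letter} :=
  [set pq | (lrank pq.1 < lrank pq.2) && (lrank (x pq.2) < lrank (x pq.1))].

Definition nneg (x : SP n) := #|[set q : 'I_n | (x (false, q)).1]|.

(* Twice the Coxeter length, see [coxlenE]. *)
Definition dlen (x : SP n) := #|inversions x| + nneg x.

Lemma lrank_tperm_adj (c d u v : letter) : lrank d = (lrank c).+1 ->
  ~~ ((u == c) && (v == d)) -> ~~ ((u == d) && (v == c)) ->
  (lrank (tperm c d u) < lrank (tperm c d v)) = (lrank u < lrank v).
Proof.
move=> hcd h1 h2.
case: (tpermP c d u) => [eu|eu|/eqP uc /eqP ud]; case: (tpermP c d v) => [ev|ev|/eqP vc /eqP vd];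
  subst; rewrite ?eqxx ?andbT ?andTb /= in h1 h2 *;
  repeat match goal with H : is_true (_ != _) |- _ => rewrite lrank_eq in H end;
  repeat match goal with H : is_true (~~ _) |- _ => rewrite ?lrank_eq in H end; lia.
Qed.

Lemma card_inversions_mul_tperm (x : SP n) (c d : letter) : lrank d = (lrank c).+1 ->
  lrank (x^-1 c) < lrank (x^-1 d) -> #|inversions (x * tperm c d)| = #|inversions x|.+1.
Proof.
move=> hcd hlt; set pq0 := (x^-1 c, x^-1 d).
suff -> : inversions (x * tperm c d) = pq0 |: inversions x.
  by rewrite cardsU1 inE /= !permKV hcd; lia.
apply/setP => -[p q]; rewrite !inE /= !permM.
case: eqP => [[-> ->]|neq]; first by rewrite !permKV tpermL tpermR hcd hlt /=; lia.
case hpq: (lrank p < lrank q) => //=.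
rewrite lrank_tperm_adj //; apply/negP => /andP [/eqP e1 /eqP e2].
  have ep : p = x^-1 d by rewrite -e2 permK.
  have eq' : q = x^-1 c by rewrite -e1 permK.
  by rewrite ep eq' in hpq; lia.
have ep : p = x^-1 c by rewrite -e2 permK.
have eq' : q = x^-1 d by rewrite -e1 permK.
by apply: neq; rewrite ep eq'.
Qed.

Lemma nneg_mul_tperm_sign (x : SP n) (c d : letter) : c.1 = d.1 ->
  nneg (x * tperm c d) = nneg x.
Proof.
move=> e; rewrite /nneg; apply: eq_card => q; rewrite !inE permM.
by case: tpermP => [->|->|].
Qed.

Lemma nneg_mul_tperm_lneg (x : SP n) (d : letter) : signed x -> d.1 = false ->
  lrank (x^-1 (lneg d)) < lrank (x^-1 d) -> nneg (x * tperm (lneg d) d) = (nneg x).+1.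
Proof.
case: d => -[] // b hx _; rewrite /lneg /= => hlt; set q0 := x^-1 (false, b).
have hc' : x^-1 (true, b) = lneg q0 by rewrite -signed_invE.
have q0s : q0.1 = false by apply/negbTE; rewrite -lrank_lneg_lt -hc'.
have eq0 : q0 = (false, q0.2) by rewrite -q0s -surjective_pairing.
have xq0 : x (false, q0.2) = (false, b) by rewrite -eq0 permKV.
rewrite /nneg; suff -> : [set q | ((x * tperm (true, b) (false, b)) (false, q)).1] =
          q0.2 |: [set q | (x (false, q)).1] by rewrite cardsU1 inE xq0.
apply/setP => q; rewrite !inE permM.
case: (eqVneq q q0.2) => [->|ne]; first by rewrite xq0 tpermR.
rewrite tpermD //=.
  apply/eqP => h; have : (false, q) = x^-1 (true, b) by rewrite h permK.
  by rewrite hc' /lneg q0s.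
apply/eqP => h; have : (false, q) = q0 by rewrite /q0 h permK.
by rewrite eq0 => -[e']; apply: (negP ne); rewrite -e'.
Qed.

Lemma lrank_mul_tperm_lneg (x : SP n) (c d : letter) : signed x -> c.1 = false -> d.1 = false ->
  lrank (x^-1 c) < lrank (x^-1 d) ->
  lrank ((x * tperm c d)^-1 (lneg d)) < lrank ((x * tperm c d)^-1 (lneg c)).
Proof.
move=> hx c1 d1 hlt; rewrite invMg !permM tpermV !tpermD ?eq_lnegF ?c1 ?d1 //.
by rewrite !signed_invE // ltn_lrank_lneg.
Qed.

Lemma dlen_mul_sgen_asc (x : SP n) i c d : signed x -> i < n -> sgen_pair i c d ->
  lrank (x^-1 c) < lrank (x^-1 d) -> dlen (x * sgen n i) = (dlen x).+2.
Proof.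
move=> hx hi hp hlt; have hcd := sgen_pair_adj hp.
have := sgen_pairE hi hp; case: eqP => _ [].
  move=> ec d1 ->; subst c.
  by rewrite /dlen card_inversions_mul_tperm // nneg_mul_tperm_lneg //; lia.
move=> c1 d1 ->; rewrite mulgA.
have hcd' := lrank_lneg_adj hcd.
have hlt' := lrank_mul_tperm_lneg hx c1 d1 hlt.
rewrite /dlen !card_inversions_mul_tperm // !nneg_mul_tperm_sign /= ?c1 ?d1 //; lia.
Qed.

Lemma dlen_mul_sgen_desc (x : SP n) i c d : signed x -> i < n -> sgen_pair i c d ->
  lrank (x^-1 d) < lrank (x^-1 c) -> dlen x = (dlen (x * sgen n i)).+2.
Proof.
move=> hx hi hp hlt; have [e1 e2] := invM_sgen_pair x hi hp.
have := dlen_mul_sgen_asc (signedM hx (@signed_sgen n i)) hi hp.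
by rewrite e1 e2 mulg_sgenK => ->.
Qed.

Lemma dlen_mul_sgen (x : SP n) i : signed x -> i < n ->
  dlen (x * sgen n i) = (dlen x).+2 \/ dlen x = (dlen (x * sgen n i)).+2.
Proof.
move=> hx hi; have [c [d hp]] := sgen_pair_exists hi.
case: (lrank_perm_ltgt x^-1 (sgen_pair_neq hp)) => h.
- by left; apply: dlen_mul_sgen_asc hx hi hp h.
- by right; apply: dlen_mul_sgen_desc hx hi hp h.
Qed.

Lemma dlen1 : dlen 1 = 0.
Proof.
apply/eqP; rewrite addn_eq0 !cards_eq0; apply/andP; split; apply/eqP/setP => p; rewrite !inE ?perm1 //.
by apply/negP => /andP [h1 h2]; lia.
Qed.

Lemma dlen_eval_le w : valid_word n w -> dlen (eval_word n w) <= (2 * size w)%N.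
Proof.
elim/last_ind: w => [|w i IH]; first by rewrite eval_nil dlen1.
rewrite /valid_word all_rcons => /andP [hi hw].
rewrite eval_rcons size_rcons.
by have := IH hw; case: (dlen_mul_sgen (@signed_eval n w) hi) => ->; lia.
Qed.

End DoubledLength.

Section CoxeterLength.
Variable n : nat.
Local Notation letter := (bool * 'I_n)%type.
Local Notation lrank := (@lrank n).

Lemma lrank_mono_perm1 (z : SP n) : {homo z : u v / lrank u < lrank v} -> z = 1.
Proof.
move=> hm.
have ge (y : SP n) : {homo y : u v / lrank u < lrank v} -> forall p, lrank p <= lrank (y p).
  move=> hy; suff h k p : lrank p = k -> k <= lrank (y p) by move=> p; exact: h.
  elim: k p => [//|k IH] p hp.
  have [u hu] : exists u, lrank u = k by apply: lrank_surj; have := lrank_lt p; lia.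
  by have := IH u hu; have := hy u p; rewrite hu hp; lia.
have hm' : {homo z^-1 : u v / lrank u < lrank v}.
  move=> u v huv; case: (lrank_perm_ltgt z^-1 (_ : u != v)) => // [|h].
    by apply/eqP => e; move: huv; rewrite e ltnn.
  by have := hm _ _ h; rewrite !permKV; lia.
apply/permP => p; rewrite perm1; apply: lrank_inj.
by have := ge _ hm p; have := ge _ hm' (z p); rewrite permK; lia.
Qed.

Definition ascent (x : SP n) i := forall c d, sgen_pair i c d -> lrank (x^-1 c) < lrank (x^-1 d).

Lemma ascents_eq1 (x : SP n) : signed x -> (forall i, i < n -> ascent x i) -> x = 1.
Proof.
move=> hx ha.
have adj u v : lrank v = (lrank u).+1 -> lrank (x^-1 u) < lrank (x^-1 v).
  case: u v => [bu a] [bv b] e; have ha' := ltn_ord a; have hb := ltn_ord b.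
  case: bu e; case: bv => e; rewrite /lrank /= in e.
  - have := ha a ha' (false, b) (false, a).
    rewrite /sgen_pair /= (_ : (nat_of_ord a == 0) = false); last by apply/eqP; lia.
    rewrite eqxx (_ : (nat_of_ord b == (nat_of_ord a).-1) = true); last by apply/eqP; lia.
    move=> /(_ isT).
    by rewrite -[(true, a)]/(lneg (false, a)) -[(true, b)]/(lneg (false, b)) !signed_invE // ltn_lrank_lneg.
  - apply: (ha 0 (leq_ltn_trans (leq0n _) ha')).
    by rewrite /sgen_pair /=; apply/andP; split; apply/eqP; lia.
  - by exfalso; lia.
  - apply: (ha b hb).
    rewrite /sgen_pair /= (_ : (nat_of_ord b == 0) = false); last by apply/eqP; lia.
    by rewrite eqxx andbT; apply/eqP; lia.
have /(congr1 (fun z => z^-1)) : x^-1 = 1.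
  by apply: lrank_mono_perm1; apply: lrank_chain => // u v w; apply: ltn_trans.
by rewrite invgK invg1.
Qed.

Lemma descent_exists (x : SP n) : signed x -> x != 1 ->
  exists i c d, [/\ i < n, sgen_pair i c d & lrank (x^-1 d) < lrank (x^-1 c)].
Proof.
move=> hx hne.
case: (boolP [exists i : 'I_n, exists c, exists d,
                sgen_pair i c d && (lrank (x^-1 d) < lrank (x^-1 c))]).
  by move=> /existsP [i /existsP [c /existsP [d /andP [hp h]]]]; exists (nat_of_ord i), c, d.
move/negP => hno; move: hne; rewrite (ascents_eq1 hx) ?eqxx // => i hi c d hp.
case: (lrank_perm_ltgt x^-1 (sgen_pair_neq hp)) => // h; case: hno.
by apply/existsP; exists (Ordinal hi); apply/existsP; exists c; apply/existsP; exists d; rewrite hp h.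
Qed.

Lemma reduced_word_exists (x : SP n) : signed x ->
  exists w, [/\ valid_word n w, eval_word n w = x & (2 * size w)%N = dlen x].
Proof.
have [k] := ubnP (dlen x); elim: k x => // k IH x hk hx.
case: (eqVneq x 1) => [->|hne]; first by exists [::]; rewrite eval_nil dlen1.
have [i [c [d [hi hp hlt]]]] := descent_exists hx hne.
have e := dlen_mul_sgen_desc hx hi hp hlt.
have [w [hw ew sw]] := IH (x * sgen n i) ltac:(lia) (signedM hx (@signed_sgen n i)).
exists (rcons w i); split.
- by rewrite /valid_word all_rcons hi.
- by rewrite eval_rcons ew mulg_sgenK.
- by rewrite size_rcons; lia.
Qed.

Lemma reducedE w : reduced n w <-> valid_word n w /\ (2 * size w)%N = dlen (eval_word n w).
Proof.
split.
  case=> hv hmin; split => //.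
  have [w' [hw' ew' sw']] := reduced_word_exists (@signed_eval n w).
  by have := hmin w' hw' ew'; have := dlen_eval_le hv; lia.
case=> hv hs; split => // w' hw' ew'.
by have := dlen_eval_le hw'; rewrite ew'; lia.
Qed.

Lemma inBn_signed (x : SP n) : inBn x -> signed x.
Proof. by case=> w [_ <-]; exact: signed_eval. Qed.

Lemma coxlenE (x : SP n) k : coxlen x k <-> inBn x /\ (2 * k)%N = dlen x.
Proof.
split.
  case=> w [/reducedE [hv hs] [ew sw]]; split; first by exists w.
  by rewrite -ew -sw.
case=> hx hk; have [w [hw ew sw]] := reduced_word_exists (inBn_signed hx).
exists w; split; last by split => //; lia.
by apply/reducedE; split => //; rewrite ew.
Qed.

Lemma inBn_mul_sgen (x : SP n) i : inBn x -> i < n -> inBn (x * sgen n i).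
Proof.
case=> w [hw <-] hi; exists (rcons w i); split; last by rewrite eval_rcons.
by rewrite /valid_word all_rcons hi.
Qed.

Lemma inBnQE (x : SP n) : inBnQ x <-> inBn x /\ forall i, 0 < i < n -> ascent x i.
Proof.
split.
  case=> hx hq; split => // i /andP [i1 hi] c d hp.
  case: (lrank_perm_ltgt x^-1 (sgen_pair_neq hp)) => // h.
  have e := dlen_mul_sgen_desc (inBn_signed hx) hi hp h.
  have hx' := inBn_mul_sgen hx hi.
  have [w [_ _ sw]] := reduced_word_exists (inBn_signed hx).
  have [w' [_ _ sw']] := reduced_word_exists (inBn_signed hx').
  have := hq i ltac:(lia) (size w) (size w').
  by rewrite !coxlenE => /(_ (conj hx sw) (conj hx' sw')); lia.
case=> hx ha; split => // i hi k k' /coxlenE [_ hk] /coxlenE [_ hk'].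
have hi' : i < n by case/andP: hi.
have [c [d hp]] := sgen_pair_exists hi'.
by have := dlen_mul_sgen_asc (inBn_signed hx) hi' hp (ha i hi c d hp); lia.
Qed.

End CoxeterLength.

Ltac lia_ifs := repeat match goal with |- context [if ?c then _ else _] =>
  first [ rewrite (_ : c = true); [|by lia] | rewrite (_ : c = false); [|by lia] ] end.

Lemma size_wword j : size (wword j) = j.+1.
Proof. by rewrite /wword size_rev size_iota. Qed.

Lemma wwordS j : wword j.+1 = j.+1 :: wword j.
Proof. by rewrite /wword -addn1 iotaD rev_cat. Qed.

Lemma wword_subseq a b : a <= b -> subseq (wword a) (wword b).
Proof.
move=> hab; rewrite /wword (_ : b.+1 = a.+1 + (b - a)); last by lia.
by rewrite iotaD rev_cat suffix_subseq.
Qed.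

Section WwordAction.
Variable n : nat.
Local Notation letter := (bool * 'I_n)%type.
Local Notation lrank := (@lrank n).

Lemma sgen_act i (v : letter) : 0 < i < n ->
  (sgen n i v).1 = v.1 /\
  nat_of_ord (sgen n i v).2 =
    (if nat_of_ord v.2 == i.-1 then i else if nat_of_ord v.2 == i then i.-1 else v.2).
Proof.
case/andP=> i0 hi; have [c [d hp]] := sgen_pair_exists hi.
have := sgen_pairE hi hp; rewrite (negbTE (lt0n_neq0 i0)) => -[c1 d1 ->].
move: hp; rewrite /sgen_pair (negbTE (lt0n_neq0 i0)) => /and4P [_ _ /eqP ec /eqP ed].
case: c d c1 d1 ec ed => [bc c] [bd d] /= -> -> ec ed.
case: v => bv l; rewrite permM !permE /= !letter_eq /= ec ed.
case: bv; rewrite /lneg /=; repeat (case: ifP => /=); rewrite ?ec ?ed;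
  repeat match goal with H : is_true (_ == _) |- _ => move/eqP: H => H end;
  repeat match goal with H : (_ == _) = false |- _ => move/eqP: H => H end; split => //; lia.
Qed.

Lemma sgen0_act (v : letter) : 0 < n ->
  (sgen n 0 v).1 = (if nat_of_ord v.2 == 0 then ~~ v.1 else v.1) /\
  nat_of_ord (sgen n 0 v).2 = v.2.
Proof.
move=> hn; have [c [d hp]] := sgen_pair_exists hn; have := sgen_pairE hn hp.
move: hp; rewrite /sgen_pair /= => /and4P [_ _ /eqP ec /eqP ed] [-> d1 ->].
case: v d d1 ed => bv l [bd d] /= -> ed; rewrite permE /= !letter_eq /= ed.
by case: bv => /=; do ! (case: eqP => ? /=); split => //; lia.
Qed.

Lemma eval_wword_act j (v : letter) : j < n ->
  (eval_word n (wword j) v).1 = (if nat_of_ord v.2 == j then ~~ v.1 else v.1) /\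
  nat_of_ord (eval_word n (wword j) v).2 =
    (if v.2 < j then (nat_of_ord v.2).+1 else if nat_of_ord v.2 == j then 0 else v.2).
Proof.
elim: j v => [|j IH] v hj.
  rewrite /wword /= eval_cons eval_nil mulg1.
  have [-> ->] := sgen0_act v hj; split => //; case: ifP => //.
  by move/eqP->.
rewrite wwordS eval_cons permM.
have [h1 h2] := sgen_act v (ltac:(lia) : 0 < j.+1 < n).
have [h3 h4] := IH (sgen n j.+1 v) (ltac:(lia) : j < n).
rewrite h3 h4 h1 h2 /=.
move: (nat_of_ord v.2) => k; case: v.1;
  have : k < j \/ k = j \/ k = j.+1 \/ j.+1 < k by lia.
  all: case=> [hk|[->|[->|hk]]]; lia_ifs; split => //; lia.
Qed.

End WwordAction.

Section MinimalRepresentatives.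
Variable n : nat.
Local Notation letter := (bool * 'I_n)%type.
Local Notation lrank := (@lrank n).

Definition inv_pos_increasing (x : SP n) := forall (p q : letter) (l m : 'I_n),
  x p = (false, l) -> x q = (false, m) -> l < m -> lrank p < lrank q.

Definition fixes_pos_from (x : SP n) b := forall j : 'I_n, b <= j -> x (false, j) = (false, j).

(* Each of the [k+1] generators of [w_{k+1}], read from the left, is an ascent. *)
Lemma dlen_mul_wword k (kk : 'I_n) (x : SP n) : nat_of_ord kk = k -> signed x ->
  (forall l : 'I_n, l < kk -> lrank (x^-1 (false, l)) < lrank (x^-1 (false, kk))) ->
  (x^-1 (false, kk)).1 = false ->
  dlen (x * eval_word n (wword k)) = dlen x + (k.+1 + k.+1).
Proof.
elim: k kk x => [|k IH] kk x ek hx h1 h2.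
  rewrite /wword /= eval_cons eval_nil mulg1.
  have hp : sgen_pair 0 (true, kk) (false, kk) by rewrite /sgen_pair /= ek eqxx.
  have hn : 0 < n by have := ltn_ord kk; lia.
  rewrite (dlen_mul_sgen_asc hx hn hp); first lia.
  by rewrite -[(true, kk)]/(lneg (false, kk)) signed_invE // lrank_lneg_lt h2.
have hk : k < n by have := ltn_ord kk; lia.
have hn : k.+1 < n by rewrite -ek ltn_ord.
set k0 : 'I_n := Ordinal hk.
have hp : sgen_pair k.+1 (false, k0) (false, kk) by rewrite /sgen_pair /= ek !eqxx.
have hlt : lrank (x^-1 (false, k0)) < lrank (x^-1 (false, kk)) by apply: h1; rewrite /= ek.
rewrite wwordS eval_cons mulgA (IH k0 (x * sgen n k.+1)) //.
- by rewrite (dlen_mul_sgen_asc hx hn hp hlt); lia.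
- exact: signedM hx (@signed_sgen n k.+1).
- have [e1 _] := invM_sgen_pair x hn hp.
  move=> l hl; rewrite e1 invMg permM sgenV_app.
  have [s1 s2] := sgen_act (false, l) (ltac:(lia) : 0 < k.+1 < n).
  have -> : sgen n k.+1 (false, l) = (false, l).
    by apply: letter_ext => //; move: hl => /= hl; rewrite s2 /=; lia_ifs.
  by apply: h1; rewrite ek; move: hl => /=; lia.
- by have [e1 _] := invM_sgen_pair x hn hp; rewrite e1.
Qed.

Section MulWword.
Variables (x : SP n) (b : 'I_n).
Hypotheses (hx : signed x) (hinc : inv_pos_increasing x) (hfix : fixes_pos_from x b).
Let y := x * eval_word n (wword b).

Let xb : x (false, b) = (false, b).
Proof. by apply: hfix; rewrite leqnn. Qed.

Let xnb : x (true, b) = (true, b).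
Proof. by rewrite -[(true, b)]/(lneg (false, b)) hx xb. Qed.

Let act v := eval_wword_act v (ltn_ord b).

Lemma inv_pos_increasing_mul_wword : inv_pos_increasing y.
Proof.
move=> p q l m; rewrite !permM => ep eq hlm.
have [u1 u2] := act (x p); have [w1 w2] := act (x q).
rewrite ep /= in u1 u2; rewrite eq /= in w1 w2.
have wpos : (x q).1 = false.
  move: w1 w2; case: ifP => [/eqP h|_ ->] //; rewrite ifN; first lia.
  by rewrite h ltnn.
case: (boolP ((x p).1)) => hp1.
  have epb : x p = (true, b).
    apply: letter_ext => //=; move: u1; case: ifP => [/eqP -> //|_].
    by rewrite hp1.
  have -> : p = (true, b) by apply: (@perm_inj _ x); rewrite epb xnb.
  case: q eq wpos w1 w2 => [[] qi] eq wpos w1 w2; rewrite /lrank /=; have := ltn_ord qi; last lia.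
  case: (ltnP qi b) => hqi; first by have := ltn_ord b; lia.
  by move: wpos; rewrite -[(true, qi)]/(lneg (false, qi)) hx hfix.
apply: (@hinc p q (x p).2 (x q).2); try apply: letter_ext => //; first exact/negbTE.
move: u1 u2 w1 w2; rewrite (negbTE hp1) wpos /=.
move: (nat_of_ord (x p).2) (nat_of_ord (x q).2) => a c.
have : a < b \/ a = b \/ b < a by lia.
have : c < b \/ c = b \/ b < c by lia.
case=> [hc'|[->|hc']]; case=> [ha|[->|ha]]; lia_ifs; intros; try congruence;
  move: hlm => /=; lia.
Qed.

Lemma fixes_pos_from_mul_wword : fixes_pos_from y b.+1.
Proof.
move=> j hj; rewrite permM hfix; last by lia.
have [v1 v2] := act (false, j).
by apply: letter_ext; rewrite ?v1 ?v2 /=; lia_ifs.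
Qed.

Lemma dlen_mul_wword_fixed : dlen y = dlen x + (b.+1 + b.+1).
Proof.
apply: dlen_mul_wword => //; last by rewrite -{1}xb permK.
by move=> l hl; apply: (@hinc _ _ l b); rewrite ?permKV.
Qed.

Lemma sign_mul_wword q : (y (false, q)).1 = (x (false, q)).1 || (q == b).
Proof.
rewrite permM; have [-> _] := act (x (false, q)).
case: eqP => [h|h].
  have [eq|eq] : x (false, q) = (false, b) \/ x (false, q) = (true, b).
    by case: (x (false, q)) h => [[] w] /= h; [right|left]; apply: letter_ext.
    have -> : q = b by have := congr1 x^-1 eq; rewrite permK -xb permK => -[].
    by rewrite xb eqxx.
  by have := congr1 x^-1 eq; rewrite permK -xnb permK.
case: eqP => [hq|]; last by rewrite orbF.
by case: h; rewrite hq xb.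
Qed.

End MulWword.

End MinimalRepresentatives.

Lemma sorted_ltn_rcons (L : seq nat) a :
  sorted ltn (rcons L a) -> sorted ltn L /\ all (fun y => y < a) L.
Proof.
move=> h; split; first exact: (subseq_sorted ltn_trans (subseq_rcons L a) h).
move: h; rewrite -rev_sorted rev_rcons /= => /(order_path_min (fun x y z h1 h2 => ltn_trans h2 h1)).
by rewrite all_rev.
Qed.

Definition wwords (L : seq nat) := flatten [seq wword j | j <- L].

Lemma wwords_rcons L a : wwords (rcons L a) = wwords L ++ wword a.
Proof. by rewrite /wwords map_rcons flatten_rcons. Qed.

Section SortedElems.
Variable n : nat.

Lemma sorted_elems_sorted (A : {set 'I_n}) : sorted ltn (sorted_elems A).
Proof.
rewrite ltn_sorted_uniq_leq /sorted_elems sort_uniq (map_inj_uniq val_inj) enum_uniq /=.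
exact: (sort_sorted leq_total).
Qed.

Lemma sorted_elems_bound (A : {set 'I_n}) : all (fun y => y < n) (sorted_elems A).
Proof. by apply/allP => y; rewrite mem_sort => /mapP [i _ ->]; exact: ltn_ord. Qed.

Lemma mem_sorted_elems (A : {set 'I_n}) (q : 'I_n) : (nat_of_ord q \in sorted_elems A) = (q \in A).
Proof. by rewrite mem_sort (mem_map val_inj) mem_enum. Qed.

Lemma size_sorted_elems (A : {set 'I_n}) : size (sorted_elems A) = #|A|.
Proof. by rewrite size_sort size_map cardE. Qed.

Lemma count_sorted_elems (A : {set 'I_n}) (P : pred nat) :
  count P (sorted_elems A) = #|[set j in A | P (nat_of_ord j)]|.
Proof.
rewrite /sorted_elems count_sort count_map -size_filter.
have -> : #|[set j in A | P (nat_of_ord j)]| = #|[seq j <- enum A | P (nat_of_ord j)]|.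
  by apply: eq_card => j; rewrite inE mem_filter mem_enum andbC.
by symmetry; apply/card_uniqP; apply: filter_uniq; exact: enum_uniq.
Qed.

End SortedElems.

Section GrassmannianElements.
Variable n : nat.
Local Notation letter := (bool * 'I_n)%type.
Local Notation lrank := (@lrank n).

Lemma valid_wwords L : all (fun y => y < n) L -> valid_word n (wwords L).
Proof.
elim: L => [//|a L IH] /= /andP [ha hL]; rewrite /valid_word /wwords /= all_cat.
apply/andP; split; last exact: IH hL.
by apply/allP => y; rewrite /wword mem_rev mem_iota => /andP [_ hy]; lia.
Qed.

Lemma eval_wwords_props L : sorted ltn L -> all (fun y => y < n) L ->
  forall b, all (fun y => y < b) L ->
  [/\ inv_pos_increasing (eval_word n (wwords L)), fixes_pos_from (eval_word n (wwords L)) b,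
      dlen (eval_word n (wwords L)) = (2 * size (wwords L))%N &
      forall q : 'I_n, ((eval_word n (wwords L)) (false, q)).1 = (nat_of_ord q \in L)].
Proof.
elim/last_ind: L => [|L a IH] hs hn b hb.
  rewrite /wwords /= eval_nil dlen1; split => //.
  - by move=> p q l m; rewrite !perm1 => -> -> /= hlm; rewrite /lrank /=; lia.
  - by move=> j _; rewrite perm1.
  - by move=> q; rewrite perm1.
have [hs' hall] := sorted_ltn_rcons hs.
move: hn hb; rewrite !all_rcons => /andP [ha hn] /andP [hab hb].
have [c1 c2 c3 c4] := IH hs' hn a hall.
set x := eval_word n (wwords L) in c1 c2 c3 c4.
have hx : signed x by apply: signed_eval.
rewrite wwords_rcons eval_cat -/x (_ : a = Ordinal ha) //; split.
- exact: inv_pos_increasing_mul_wword.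
- by move=> j hj; apply: fixes_pos_from_mul_wword => //; move: hj => /=; lia.
- by rewrite dlen_mul_wword_fixed // c3 size_cat size_wword /=; lia.
- by move=> q; rewrite sign_mul_wword // c4 mem_rcons in_cons orbC.
Qed.

Lemma inv_pos_increasing_wI (I : {set 'I_n}) : inv_pos_increasing (wI I).
Proof.
by have [] := eval_wwords_props (sorted_elems_sorted I) (sorted_elems_bound I) (sorted_elems_bound I).
Qed.

Lemma dlen_wI (I : {set 'I_n}) : dlen (wI I) = (2 * size (wwords (sorted_elems I)))%N.
Proof.
by have [] := eval_wwords_props (sorted_elems_sorted I) (sorted_elems_bound I) (sorted_elems_bound I).
Qed.

Lemma wI_sign (I : {set 'I_n}) q : ((wI I) (false, q)).1 = (q \in I).
Proof.
have [_ _ _ ->] :=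
  eval_wwords_props (sorted_elems_sorted I) (sorted_elems_bound I) (sorted_elems_bound I).
exact: mem_sorted_elems.
Qed.

Lemma inBn_wI (I : {set 'I_n}) : inBn (wI I).
Proof. by exists (wwords (sorted_elems I)); split => //; exact: valid_wwords (sorted_elems_bound _). Qed.

Lemma inv_pos_increasingE (x : SP n) :
  inv_pos_increasing x <-> forall i, 0 < i < n -> ascent x i.
Proof.
split.
  move=> hc i hi [bc c] [bd d]; rewrite /sgen_pair (_ : (i == 0) = false) /=; last by apply/eqP; lia.
  move=> /and4P [/negbTE -> /negbTE -> /eqP ec /eqP ed].
  by apply: (@hc _ _ c d); rewrite ?permKV //; lia.
move=> ha p q l m ep eq hlm.
rewrite -(permK x p) -(permK x q) ep eq.
have := @rank_chain 'I_n (@nat_of_ord n) (fun l m => lrank (x^-1 (false, l)) < lrank (x^-1 (false, m))).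
apply => //; first by move=> ? ? ?; apply: ltn_trans.
  move=> l' m' k hk; have hk' : k < n by have := ltn_ord m'; lia.
  by exists (Ordinal hk').
move=> l' m' e; apply: (ha m'); first by have := ltn_ord m'; lia.
by rewrite /sgen_pair /= e /= !eqxx.
Qed.

Lemma inv_pos_increasing_agree_step (x y : SP n) (l : 'I_n) :
  inv_pos_increasing x -> inv_pos_increasing y -> (forall p, (x p).1 = (y p).1) ->
  (forall l' : 'I_n, l' < l -> x^-1 (false, l') = y^-1 (false, l')) ->
  ~ lrank (x^-1 (false, l)) < lrank (y^-1 (false, l)).
Proof.
move=> hcx hcy hs IH hlt.
set p := x^-1 (false, l) in hlt; set q := y^-1 (false, l) in hlt.
have xp : x p = (false, l) by rewrite permKV.
have yq : y q = (false, l) by rewrite permKV.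
have yp1 : (y p).1 = false by rewrite -hs xp.
have yp : y p = (false, (y p).2) by rewrite -yp1 -surjective_pairing.
case: (ltngtP (nat_of_ord (y p).2) l) => h.
- have := IH _ h; rewrite -yp permK -/p => e.
  have e2 : y p = (false, l) by have := congr1 x e; rewrite permKV xp.
  by move: h; rewrite e2 /= ltnn.
- by have := @hcy q p l (y p).2 yq yp h; lia.
- have : y p = y q by rewrite yp yq; congr pair; apply: val_inj.
  by move/perm_inj => e; move: hlt; rewrite e ltnn.
Qed.

(* By induction on [l], [x^-1] and [y^-1] agree on the positive letter [l]. *)
Lemma inv_pos_increasing_eq (x y : SP n) : signed x -> signed y ->
  inv_pos_increasing x -> inv_pos_increasing y ->
  (forall q : 'I_n, (x (false, q)).1 = (y (false, q)).1) -> x = y.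
Proof.
move=> hx hy hcx hcy hq.
have hs p : (x p).1 = (y p).1.
  case: p => -[] q; last exact: hq.
  by rewrite -[(true, q)]/(lneg (false, q)) hx hy /= hq.
have agree_pos k (l : 'I_n) : nat_of_ord l < k -> x^-1 (false, l) = y^-1 (false, l).
  elim: k l => [//|k IH] l hl.
  have IH' (l' : 'I_n) : l' < l -> x^-1 (false, l') = y^-1 (false, l').
    by move=> h; apply: IH; lia.
  case: (ltngtP (lrank (x^-1 (false, l))) (lrank (y^-1 (false, l)))) => h.
  - by case: (inv_pos_increasing_agree_step hcx hcy hs IH' h).
  - case: (inv_pos_increasing_agree_step hcy hcx (fun p => esym (hs p)) _ h).
    by move=> l' h'; rewrite IH'.
  - exact: lrank_inj.
have hinv : x^-1 = y^-1.
  apply/permP => -[[] l]; last exact: (agree_pos l.+1).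
  by rewrite -[(true, l)]/(lneg (false, l)) !signed_invE // (agree_pos l.+1).
by rewrite -(invgK x) hinv invgK.
Qed.

Lemma inBnQ_wI (x : SP n) : inBnQ x <-> exists I : {set 'I_n}, x = wI I.
Proof.
split.
  case/inBnQE => hx ha; exists [set q | (x (false, q)).1].
  apply: inv_pos_increasing_eq => //.
  - exact: inBn_signed.
  - exact: signed_eval.
  - exact/inv_pos_increasingE.
  - exact: inv_pos_increasing_wI.
  - by move=> q; rewrite wI_sign inE.
case=> I ->; apply/inBnQE; split; first exact: inBn_wI.
exact/inv_pos_increasingE/inv_pos_increasing_wI.
Qed.

End GrassmannianElements.

Lemma subseq_rcons_inv (T : eqType) (b a : seq T) s : subseq b (rcons a s) ->
  subseq b a \/ exists b', b = rcons b' s /\ subseq b' a.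
Proof.
rewrite -subseq_rev rev_rcons.
case/lastP: b => [|b' x]; first by rewrite sub0seq; left.
rewrite rev_rcons /=; case: eqP => [->|_] h.
  by right; exists b'; split => //; rewrite -subseq_rev.
by left; rewrite -subseq_rev rev_rcons.
Qed.

Section RankCounts.
Variable n : nat.
Local Notation letter := (bool * 'I_n)%type.
Local Notation lrank := (@lrank n).

(* The entries of the rank matrix of [x]: Bruhat order on permutations compares them. *)
Definition rank_count (x : SP n) (k t : nat) :=
  #|[set p : letter | (lrank p <= k) && (t <= lrank (x p))]|.

Definition rank_le (u w : SP n) := forall k t, rank_count u k t <= rank_count w k t.

Lemma rank_le_refl u : rank_le u u.
Proof. by move=> k t. Qed.

Lemma rank_le_trans u v w : rank_le u v -> rank_le v w -> rank_le u w.
Proof. by move=> h1 h2 k t; apply: leq_trans (h1 k t) (h2 k t). Qed.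

Lemma rank_count_split (x : SP n) k (v : letter) :
  rank_count x k (lrank v) = rank_count x k (lrank v).+1 + (lrank (x^-1 v) <= k).
Proof.
rewrite /rank_count.
set S := [set p : letter | (lrank p <= k) && ((lrank v).+1 <= lrank (x p))].
have hS p : p != x^-1 v -> ((lrank p <= k) && (lrank v <= lrank (x p))) = (p \in S).
  move=> ne; rewrite inE; case: (lrank p <= k) => //=; rewrite leq_eqVlt.
  case: eqP => //= e; exfalso; apply: (negP ne); apply/eqP.
  by rewrite (lrank_inj e) permK.
case: (boolP (lrank (x^-1 v) <= k)) => h.
  rewrite (_ : [set p : letter | _] = x^-1 v |: S).
    by rewrite cardsU1 !inE permKV ltnn andbF addnC.
  apply/setP => p; rewrite !inE.
  case: (eqVneq p (x^-1 v)) => [->|ne]; first by rewrite permKV h leqnn.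
  by rewrite hS // inE.
rewrite addn0; apply: eq_card => p; rewrite !inE.
case: (eqVneq p (x^-1 v)) => [->|ne]; first by rewrite (negbTE h).
by rewrite hS // inE.
Qed.

Lemma rank_count_mul_tperm_other (x : SP n) (c d : letter) k t :
  lrank d = (lrank c).+1 -> t != (lrank c).+1 -> rank_count (x * tperm c d) k t = rank_count x k t.
Proof.
move=> hcd ht; apply: eq_card => p; rewrite !inE permM.
case: tpermP => [->|->|_ _] //; rewrite ?hcd; case: (lrank p <= k) => //=; move: ht => /eqP; lia.
Qed.

Lemma rank_count_mul_tperm (x : SP n) (c d : letter) k : lrank d = (lrank c).+1 ->
  rank_count (x * tperm c d) k (lrank d) + (lrank (x^-1 d) <= k) =
  rank_count x k (lrank d) + (lrank (x^-1 c) <= k).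
Proof.
move=> hcd.
have e1 := rank_count_split (x * tperm c d) k c.
have e2 := rank_count_split x k c.
have e3 : rank_count (x * tperm c d) k (lrank c) = rank_count x k (lrank c).
  by apply: rank_count_mul_tperm_other => //; apply/eqP; lia.
have e4 : (x * tperm c d)^-1 c = x^-1 d by rewrite invMg permM tpermV tpermL.
by rewrite e4 in e1; rewrite hcd; lia.
Qed.

Lemma rank_le_mul_tperm (x : SP n) (c d : letter) : lrank d = (lrank c).+1 ->
  lrank (x^-1 c) < lrank (x^-1 d) -> rank_le x (x * tperm c d).
Proof.
move=> hcd hlt k t.
case: (eqVneq t (lrank c).+1) => [->|ht]; last by rewrite rank_count_mul_tperm_other.
have := rank_count_mul_tperm x k hcd; rewrite hcd.
by case: (leqP (lrank (x^-1 d)) k) => h1; case: (leqP (lrank (x^-1 c)) k) => h2 /=; lia.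
Qed.

Lemma rank_le_lift (u w : SP n) (c d : letter) : lrank d = (lrank c).+1 ->
  lrank (w^-1 c) < lrank (w^-1 d) -> rank_le u w -> rank_le (u * tperm c d) (w * tperm c d).
Proof.
move=> hcd hlt hp k t.
case: (eqVneq t (lrank c).+1) => [->|ht]; last by rewrite !rank_count_mul_tperm_other.
have U := rank_count_mul_tperm u k hcd; have W := rank_count_mul_tperm w k hcd.
have U0 := rank_count_split u k c; have W0 := rank_count_split w k c.
have U2 := rank_count_split u k d; have W2 := rank_count_split w k d.
have P0 := hp k (lrank c); have P1 := hp k (lrank d); have P2 := hp k (lrank d).+1.
rewrite hcd in U W U2 W2 P1 P2 *.
move: U W U0 W0 U2 W2.
case: (leqP (lrank (u^-1 d)) k) => h1; case: (leqP (lrank (u^-1 c)) k) => h2;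
case: (leqP (lrank (w^-1 d)) k) => h3; case: (leqP (lrank (w^-1 c)) k) => h4 /=; lia.
Qed.

Lemma rank_le_mul_sgen (w : SP n) i c d : signed w -> i < n -> sgen_pair i c d ->
  lrank (w^-1 c) < lrank (w^-1 d) ->
  rank_le w (w * sgen n i) /\ forall u, rank_le u w -> rank_le (u * sgen n i) (w * sgen n i).
Proof.
move=> hw hi hp hlt; have hcd := sgen_pair_adj hp.
have := sgen_pairE hi hp; case: eqP => _ [].
  by move=> _ _ ->; split; [exact: rank_le_mul_tperm | move=> u; exact: rank_le_lift].
move=> c1 d1 ->.
have hcd' := lrank_lneg_adj hcd.
have hlt' := lrank_mul_tperm_lneg hw c1 d1 hlt.
split=> [|u h]; rewrite !mulgA.
  exact: rank_le_trans (rank_le_mul_tperm hcd hlt) (rank_le_mul_tperm hcd' hlt').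
by apply: rank_le_lift hcd' hlt' _; apply: rank_le_lift hcd hlt h.
Qed.

Lemma rank_le_subword a : valid_word n a -> dlen (eval_word n a) = (2 * size a)%N ->
  forall b, subseq b a -> rank_le (eval_word n b) (eval_word n a).
Proof.
elim/last_ind: a => [|a s IH] hv hd b hb.
  by move: hb; rewrite subseq0 => /eqP ->; exact: rank_le_refl.
move: hv; rewrite /valid_word all_rcons => /andP [hs hv].
move: hd; rewrite eval_rcons size_rcons => hd.
have hx := @signed_eval n a.
have hle := dlen_eval_le hv.
have [c [d hp]] := sgen_pair_exists hs.
have hlt : lrank ((eval_word n a)^-1 c) < lrank ((eval_word n a)^-1 d).
  case: (lrank_perm_ltgt (eval_word n a)^-1 (sgen_pair_neq hp)) => // h.
  by have := dlen_mul_sgen_desc hx hs hp h; lia.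
have hd' : dlen (eval_word n a) = (2 * size a)%N by have := dlen_mul_sgen_asc hx hs hp hlt; lia.
have [P1 P2] := rank_le_mul_sgen hx hs hp hlt.
case: (subseq_rcons_inv hb) => [h|[b' [-> h]]].
  exact: rank_le_trans (IH hv hd' b h) P1.
by rewrite eval_rcons; apply/P2/IH.
Qed.

End RankCounts.

Lemma count_leq_all_gt (L : seq nat) x s : s < x -> all (fun y => x < y) L ->
  count (fun y => y <= s) L = 0.
Proof.
move=> hx /allP ha; rewrite -(count_pred0 L); apply: eq_in_count => y /ha hy /=.
by apply/negbTE; rewrite -ltnNge; lia.
Qed.

Lemma count_geq_all_lt (L : seq nat) t : all (fun y => y < t) L -> count (fun y => t <= y) L = 0.
Proof.
move=> /allP ha; rewrite -(count_pred0 L); apply: eq_in_count => y /ha hy /=.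
by apply/negbTE; rewrite -ltnNge.
Qed.

Lemma nth_leq_count (L : seq nat) k s : sorted ltn L -> k < size L ->
  (nth 0 L k <= s) = (k < count (fun y => y <= s) L).
Proof.
elim: L k => [//|x L IH] k hs hk /=.
have hsL : sorted ltn L := path_sorted hs.
have hall : all (fun y => x < y) L := order_path_min ltn_trans hs.
case: k hk => [_|k hk] /=.
  by case: (leqP x s) => h //=; rewrite (count_leq_all_gt h).
case: (leqP x s) => h /=; first by rewrite IH.
rewrite (count_leq_all_gt h hall) ltn0; apply/negbTE; rewrite -ltnNge.
by have /allP := hall; move=> /(_ (nth 0 L k) (mem_nth 0 (hk : k < size L))); lia.
Qed.

Lemma subseq_wwords (B A : seq nat) : sorted ltn A -> sorted ltn B ->
  (forall t, count (fun y => t <= y) A <= count (fun y => t <= y) B) ->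
  subseq (wwords A) (wwords B).
Proof.
elim/last_ind: B A => [|B b IH] A hA hB hc.
  have := hc 0; rewrite /= leqn0 (eq_count (a2 := predT)) // count_predT size_eq0 => /eqP ->.
  by [].
case/lastP: A hA hc => [|A a] hA hc; first by rewrite /wwords /= sub0seq.
have [hA' allA] := sorted_ltn_rcons hA.
have [hB' allB] := sorted_ltn_rcons hB.
have hab : a <= b.
  case: (leqP a b) => // hba; exfalso.
  have := hc a; rewrite -!cats1 !count_cat /= leqnn (leqNgt a b) hba /=.
  rewrite (@count_geq_all_lt B a); first lia.
  by apply/allP => y /(allP allB) /= hy; lia.
rewrite !wwords_rcons; apply: cat_subseq; last exact: wword_subseq.
apply: IH => // t; have := hc t; rewrite -!cats1 !count_cat /=.
case: (leqP t a) => hta; first by rewrite (leq_trans hta hab) /=; lia.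
by rewrite (@count_geq_all_lt A t) //; apply/allP => y /(allP allA) /= hy; lia.
Qed.

Section TableauOrder.
Variable n : nat.
Local Notation letter := (bool * 'I_n)%type.
Local Notation lrank := (@lrank n).

Definition lower (s : nat) := [set j : 'I_n | nat_of_ord j <= s].

Lemma card_lowerI_sorted_elems (A : {set 'I_n}) s :
  count (fun y => y <= s) (sorted_elems A) = #|lower s :&: A|.
Proof. by rewrite count_sorted_elems; apply: eq_card => j; rewrite !inE andbC. Qed.

Lemma tab_leE (I J : {set 'I_n}) :
  tab_le I J <-> (forall s, s < n -> #|lower s :&: J| <= #|lower s :&: I|).
Proof.
split.
  rewrite /tab_le => /orP [/eqP -> | /and3P [hI hcard /allP hk]] s hs.
    by rewrite setI0 cards0.
  rewrite -!card_lowerI_sorted_elems.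
  case m0: (count (fun y => y <= s) (sorted_elems J)) => [//|m'].
  have hm' : m' < size (sorted_elems J).
    by have := count_size (fun y => y <= s) (sorted_elems J); lia.
  have h1 : nth 0 (sorted_elems J) m' <= s by rewrite nth_leq_count ?sorted_elems_sorted // m0.
  have h2 : kth I m' <= kth J m' by apply: hk; rewrite mem_iota /= -size_sorted_elems.
  have hm'' : m' < size (sorted_elems I) by rewrite !size_sorted_elems in hm' *; lia.
  have : nth 0 (sorted_elems I) m' <= s by rewrite /kth in h2; lia.
  by rewrite nth_leq_count ?sorted_elems_sorted.
move=> hc; rewrite /tab_le; case: (eqVneq J set0) => [->|hJ] //=.
have [j0 hj0] := set0Pn _ hJ.
have hn : 0 < n by case: j0 {hj0} => m hm; lia.
have lower_full (A : {set 'I_n}) : #|lower n.-1 :&: A| = #|A|.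
  by apply: eq_card => j; rewrite !inE; have := ltn_ord j; case: (j \in A); rewrite ?andbT //=; lia.
have hcard : #|J| <= #|I| by have := hc n.-1 ltac:(lia); rewrite !lower_full.
have hJ0 : 0 < #|J| by rewrite card_gt0.
apply/and3P; split => //.
  by apply/eqP => hI0; move: hcard; rewrite hI0 cards0; lia.
apply/allP => k; rewrite mem_iota /= => hk.
have hkJ : k < size (sorted_elems J) by rewrite size_sorted_elems.
set s := kth J k.
have hs : s < n by have := allP (sorted_elems_bound J) _ (mem_nth 0 hkJ).
have h1 : k < count (fun y => y <= s) (sorted_elems J).
  by rewrite -nth_leq_count ?sorted_elems_sorted.
have := hc s hs; rewrite -!card_lowerI_sorted_elems => h2.
have hkI : k < size (sorted_elems I).
  by have := count_size (fun y => y <= s) (sorted_elems I); lia.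
by rewrite /kth nth_leq_count ?sorted_elems_sorted //; lia.
Qed.

Lemma gmap_mem (I : {set 'I_n}) k : (k \in gmap I) = (rev_ord k \notin I).
Proof.
rewrite /gmap; apply/imsetP/idP => [[j hj ->]|h]; first by rewrite rev_ordK -in_setC.
by exists (rev_ord k); [rewrite in_setC | rewrite rev_ordK].
Qed.

Lemma gmapK : involutive (@gmap n).
Proof. by move=> I; apply/setP => k; rewrite !gmap_mem rev_ordK negbK. Qed.

Lemma alpha_inj : injective (@alpha n).
Proof.
move=> I J e; rewrite -(gmapK I) -(gmapK J); congr gmap.
by apply/setP => q; rewrite -!wI_sign; move: e; rewrite /alpha => ->.
Qed.

Lemma count_geq_gmap (A : {set 'I_n}) t :
  count (fun y => t <= y) (sorted_elems (gmap A)) = if t < n then #|lower (n - 1 - t) :\: A| else 0.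
Proof.
rewrite count_sorted_elems; case: ltnP => ht.
  rewrite -(card_imset _ (@rev_ord_inj n)); apply: eq_card => j.
  rewrite inE gmap_mem -[in RHS](rev_ordK j) (mem_imset _ _ (@rev_ord_inj n)) !inE /=.
  by congr andb; have := ltn_ord j; case: (leqP t j); case: (leqP (n - j.+1) (n - 1 - t)); lia.
apply/eqP; rewrite cards_eq0; apply/eqP/setP => j; rewrite !inE.
by have := ltn_ord j; rewrite andbC; case: (leqP t j) => //= h hj; lia.
Qed.

(* The letters of rank [<= s] are [-n, ..., -(n-s)], and [alpha I] makes [-(n-j)]
   positive iff [j \notin I]. *)
Lemma rank_count_alpha (I : {set 'I_n}) s : s < n -> rank_count (alpha I) s n = #|lower s :\: I|.
Proof.
move=> hs; rewrite /rank_count.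
have hinj : injective (fun j : 'I_n => ((true, rev_ord j) : letter)).
  by move=> j1 j2 e; apply: rev_ord_inj; exact: (congr1 snd e).
rewrite -(card_imset _ hinj); apply: eq_card => -[[] q]; rewrite !inE.
  rewrite -[in RHS](rev_ordK q) (mem_imset _ _ hinj) !inE lrank_pos.
  rewrite -[(true, q)]/(lneg (false, q)) (@signed_eval n) /= negbK /alpha wI_sign gmap_mem.
  by rewrite /lrank /= andbC; congr andb; apply/idP/idP => /=; lia.
rewrite (_ : (lrank (false, q) <= s) = false); last by rewrite /lrank /=; apply/negbTE; lia.
by apply/esym/negP => /imsetP [j _].
Qed.

Lemma tab_le_bruhat (I J : {set 'I_n}) : tab_le I J <-> bruhat (alpha I) (alpha J).
Proof.
have hsplit (A : {set 'I_n}) s : #|lower s :&: A| + #|lower s :\: A| = #|lower s|.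
  exact: cardsID.
have reduced_alpha (A : {set 'I_n}) : reduced n (wwords (sorted_elems (gmap A))).
  apply/reducedE; split; first exact: valid_wwords (sorted_elems_bound _).
  by rewrite -dlen_wI.
split.
  move=> /tab_leE hc.
  exists (wwords (sorted_elems (gmap J))), (wwords (sorted_elems (gmap I))); split => //.
  apply: subseq_wwords; rewrite ?sorted_elems_sorted // => t; rewrite !count_geq_gmap.
  case: ifP => // ht; have := hc (n - 1 - t) ltac:(lia).
  by have := hsplit I (n - 1 - t); have := hsplit J (n - 1 - t); lia.
case=> a [b [ra ea rb eb hsub]].
have [va da] := (@reducedE n a).1 ra.
have := rank_le_subword va (esym da) hsub; rewrite ea eb => hle.
apply/tab_leE => s hs; have := hle s n; rewrite !rank_count_alpha //.
by have := hsplit I s; have := hsplit J s; lia.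
Qed.

End TableauOrder.

Theorem mainTheorem13 (n : nat) :
  (forall x : SP n, inBnQ x <-> exists I : {set 'I_n}, x = wI I) /\
  (forall I : {set 'I_n}, inBnQ (alpha I)) /\
  (forall x : SP n, inBnQ x -> exists I : {set 'I_n}, alpha I = x) /\
  injective (@alpha n) /\
  (forall I J : {set 'I_n}, tab_le I J <-> bruhat (alpha I) (alpha J)).
Proof.
split; first exact: inBnQ_wI.
split; first by move=> I; apply/inBnQ_wI; exists (gmap I).
split; first by move=> x /inBnQ_wI [J ->]; exists (gmap J); rewrite /alpha gmapK.
split; [exact: alpha_inj | exact: tab_le_bruhat].
Qed.
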